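(* (1) If $(\alpha^*,u_1^* )$ is an inverse Stackelberg solution, then the pair $(u_0^*,u_1^* )$ with $u_0^*=\alpha^*[u_1^*]$ belongs to $\mathcal{A}$ and $(u_0^*,u_1^* )\in\operatorname{Argmax}\{J_0(u_0,u_1):(u_0,u_1)\in\mathcal{A}\}$. (2) If $(u_0^*,u_1^* )\in\mathcal{A}$ satisfies $(u_0^*,u_1^* )\in\operatorname{Argmax}\{J_0(u_0,u_1):(u_0,u_1)\in\mathcal{A}\}$, then there exists an incentive strategy $\alpha^*$ of the leader such that $\alpha^*[u_1^*]=u_0^*$ and $(\alpha^*,u_1^* )$ is an inverse Stackelberg solution. (3) There exists at least one inverse Stackelberg solution.
   Context: Two-player static game: player $0$ is the leader, player $1$ the follower. $P_0,P_1$ are nonempty compact metric spaces (strategy sets) and $J_0,J_1:P_0\times P_1\to\mathbb{R}$ are continuous payoff functions; each player maximizes his payoff. An incentive strategy of the leader is an arbitrary map $\alpha:P_1\to P_0$, written $u_1\mapsto\alpha[u_1]$. The set of optimal strategies of the follower against $\alpha$ is $\mathcal{F}(\alpha)=\{u_1^*\in P_1: J_1(\alpha[u_1],u_1)\le J_1(\alpha[u_1^*],u_1^* )\ \text{for all } u_1\in P_1\}$. A pair $(\alpha^*,u_1^* )$ (incentive strategy, follower strategy) is an inverse Stackelberg solution if $u_1^*\in\mathcal{F}(\alpha^* )$ and for every incentive strategy $\alpha$, $J_0(\alpha^*[u_1^*],u_1^* )\ge\sup\{J_0(\alpha[u_1],u_1):u_1\in\mathcal{F}(\alpha)\}$ (with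 $\sup\emptyset=-\infty$). Let $V^-=\max_{u_1\in P_1}\min_{u_0\in P_0}J_1(u_0,u_1)$ and $\mathcal{A}=\{(u_0,u_1)\in P_0\times P_1: J_1(u_0,u_1)\ge V^-\}$. *)

From Stdlib Require Import Reals List.
Open Scope R_scope.

Definition open_in (X : Metric_Space) (U : Base X -> Prop) : Prop :=
  forall x, U x -> exists e, e > 0 /\ forall y, dist X x y < e -> U y.

Definition compact_space (X : Metric_Space) : Prop :=
  forall (I : Type) (U : I -> Base X -> Prop),
    (forall i, open_in X (U i)) ->
    (forall x, exists i, U i x) ->
    exists l : list I, forall x, exists i, In i l /\ U i x.

Definition nonempty_space (X : Metric_Space) : Prop := inhabited (Base X).

Definition continuous2 (X0 X1 : Metric_Space) (J : Base X0 -> Base X1 -> R) : Prop :=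
  forall x0 x1 eps, eps > 0 -> exists delta, delta > 0 /\
    forall y0 y1, dist X0 x0 y0 < delta -> dist X1 x1 y1 < delta ->
      Rabs (J y0 y1 - J x0 x1) < eps.

Definition is_min_value {A : Type} (f : A -> R) (m : R) : Prop :=
  (exists a, f a = m) /\ forall a, m <= f a.
Definition is_max_value {A : Type} (f : A -> R) (m : R) : Prop :=
  (exists a, f a = m) /\ forall a, f a <= m.

Definition is_lower_value {P0 P1 : Type} (J1 : P0 -> P1 -> R) (V : R) : Prop :=
  exists g : P1 -> R,
    (forall u1, is_min_value (fun u0 => J1 u0 u1) (g u1)) /\ is_max_value g V.

Definition in_A {P0 P1 : Type} (J1 : P0 -> P1 -> R) (V : R) (u0 : P0) (u1 : P1) : Prop :=
  J1 u0 u1 >= V.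

Definition follower_opt {P0 P1 : Type} (J1 : P0 -> P1 -> R) (alpha : P1 -> P0) (u1s : P1) : Prop :=
  forall u1, J1 (alpha u1) u1 <= J1 (alpha u1s) u1s.

(* Inverse Stackelberg solution. The condition
   J0(alphas[u1s],u1s) >= sup {J0(alpha[u1],u1) : u1 in F(alpha)}  (sup of empty = -oo)
   is written out as: it bounds every element of that set. *)
Definition inverse_stackelberg {P0 P1 : Type} (J0 J1 : P0 -> P1 -> R)
    (alphas : P1 -> P0) (u1s : P1) : Prop :=
  follower_opt J1 alphas u1s /\
  forall (alpha : P1 -> P0) (u1 : P1), follower_opt J1 alpha u1 ->
    J0 (alpha u1) u1 <= J0 (alphas u1s) u1s.

Definition argmax_A {P0 P1 : Type} (J0 J1 : P0 -> P1 -> R) (V : R) (u0 : P0) (u1 : P1) : Prop :=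
  in_A J1 V u0 u1 /\ forall v0 v1, in_A J1 V v0 v1 -> J0 v0 v1 <= J0 u0 u1.

(* Against a follower strategy attaining the lower value V^-, every
   optimal response of the follower earns him at least V^-, so an inverse
   Stackelberg outcome lies in A.  Conversely, any (v0, v1) in A is
   implementable: play v0 against v1 and punish every other u1 with an
   action holding the follower's payoff at or below V^-.  Hence the leader
   can do no better than the maximum of J0 on A and can always reach it; the
   maximum exists because A is a closed, nonempty subset of the compact
   space P0 x P1 and J0 is continuous. *)
From Stdlib Require Import Reals List Lra Classical ClassicalEpsilon.
Open Scope R_scope.

(* [compact_space X] is [cover_compact (open_in X)] by conversion. *)
Definition cover_compact {T : Type} (Op : (T -> Prop) -> Prop) : Prop :=
  forall (I : Type) (U : I -> T -> Prop),
    (forall i, Op (U i)) -> (forall x, exists i, U i x) ->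
    exists l : list I, forall x, exists i, In i l /\ U i x.

Lemma In_list_argmax {T : Type} (f : T -> R) (l : list T) (a : T) :
  In a l -> exists m, In m l /\ forall x, In x l -> f x <= f m.
Proof.
  revert a; induction l as [|b l IH]; simpl; [tauto|].
  intros a _. destruct l as [|c l'].
  - exists b. split; [auto|]. intros x [->|[]]. lra.
  - destruct (IH c (or_introl eq_refl)) as [m [Hm Hmax]].
    destruct (Rle_dec (f b) (f m)).
    + exists m. split; [right; exact Hm|]. intros x [->|Hx]; [lra|auto].
    + exists b. split; [left; auto|]. intros x [->|Hx]; [lra|].
      specialize (Hmax x Hx). lra.
Qed.

Lemma list_pos_lower_bound {T : Type} (f : T -> R) (l : list T) :
  (forall x, f x > 0) -> exists d, d > 0 /\ forall x, In x l -> d <= f x.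
Proof.
  intros Hf. induction l as [|a l [d [Hd Hle]]]; simpl.
  - exists 1. split; [lra | tauto].
  - exists (Rmin (f a) d). split; [apply Rmin_glb_lt; [apply Hf | exact Hd]|].
    intros x [<-|Hx]; [apply Rmin_l|].
    eapply Rle_trans; [apply Rmin_r | auto].
Qed.

(* Otherwise every point of [A] is beaten by another one, and the open sets
   [{f < f q} \/ ~ A], q in A, cover the space; the best index of a finite
   subcover is beaten by none of them. *)
Lemma cover_compact_attains_max {T : Type} (Op : (T -> Prop) -> Prop)
    (A : T -> Prop) (f : T -> R) :
  cover_compact Op -> (exists a, A a) ->
  (forall q, Op (fun p => f p < f q \/ ~ A p)) ->
  exists m, A m /\ forall p, A p -> f p <= f m.
Proof.
  intros Hcomp [a Ha] Hopen. apply NNPP; intro Hno.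
  assert (Hbeaten : forall m, A m -> exists p, A p /\ f m < f p).
  { intros m Am. apply NNPP; intro Hn. apply Hno. exists m. split; auto.
    intros p Ap. apply Rnot_lt_le. intro Hlt. apply Hn. eauto. }
  destruct (Hcomp {q : T | A q} (fun q p => f p < f (proj1_sig q) \/ ~ A p))
    as [l Hl].
  - intros [q Hq]. apply Hopen.
  - intros x. destruct (classic (A x)) as [Ax|nAx].
    + destruct (Hbeaten x Ax) as [p [Ap Hp]]. exists (exist _ p Ap). simpl. auto.
    + exists (exist _ a Ha). auto.
  - destruct (Hl a) as [i0 [Hi0 _]].
    destruct (In_list_argmax (fun q => f (proj1_sig q)) l i0 Hi0)
      as [[m Am] [Hm Hmax]].
    destruct (Hl m) as [[q Aq] [Hq [Hlt|HnA]]]; simpl in *; [|tauto].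
    specialize (Hmax _ Hq). simpl in Hmax. lra.
Qed.

Lemma dist_self (X : Metric_Space) (x : Base X) : dist X x x = 0.
Proof. apply (proj2 (dist_refl X x x) eq_refl). Qed.

Lemma ball_open (X : Metric_Space) (x : Base X) (e : R) :
  open_in X (fun y => dist X x y < e).
Proof.
  intros y Hy. exists (e - dist X x y). split; [lra|].
  intros z Hz. pose proof (dist_tri X x z y). lra.
Qed.

Lemma compact_attains_max (X : Metric_Space) (f : Base X -> R) :
  compact_space X -> nonempty_space X ->
  (forall c, open_in X (fun x => f x < c)) ->
  exists m, forall x, f x <= f m.
Proof.
  intros Hcomp [a] Husc.
  destruct (cover_compact_attains_max (open_in X) (fun _ => True) f Hcomp)
    as [m [_ Hm]].
  - exists a. exact I.
  - intros q p [Hp|Hn]; [|contradiction (Hn I)]. destruct (Husc (f q) p Hp) as [e [He Hball]].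
    exists e. split; [exact He|]. intros y Hy. left. exact (Hball y Hy).
  - exists m. auto.
Qed.

Definition box_open (X0 X1 : Metric_Space) (W : Base X0 * Base X1 -> Prop) : Prop :=
  forall p, W p -> exists e, e > 0 /\ forall y0 y1,
    dist X0 (fst p) y0 < e -> dist X1 (snd p) y1 < e -> W (y0, y1).

Section ProductCompact.

Variables (X0 X1 : Metric_Space) (I : Type) (W : I -> Base X0 * Base X1 -> Prop).
Hypotheses (HW : forall i, box_open X0 X1 (W i)) (Hcov : forall p, exists i, W i p).

Lemma tube_cover : compact_space X0 -> forall x1, exists d, d > 0 /\
  exists li : list I, forall y0 y1,
    dist X1 x1 y1 < d -> exists i, In i li /\ W i (y0, y1).
Proof.
  intros C0 x1.
  assert (Hbox : forall x0, exists ie : I * R, snd ie > 0 /\ forall y0 y1,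
    dist X0 x0 y0 < snd ie -> dist X1 x1 y1 < snd ie -> W (fst ie) (y0, y1)).
  { intros x0. destruct (Hcov (x0, x1)) as [i Hi].
    destruct (HW i _ Hi) as [e [He Hb]]. exists (i, e). auto. }
  destruct (choice _ Hbox) as [ie Hie].
  destruct (C0 (Base X0) (fun x0 y0 => dist X0 x0 y0 < snd (ie x0))) as [l0 Hl0].
  - intros x0. apply ball_open.
  - intros x. exists x. rewrite dist_self. apply (proj1 (Hie x)).
  - destruct (list_pos_lower_bound (fun x0 => snd (ie x0)) l0) as [d [Hd Hle]].
    { intros x0. apply (proj1 (Hie x0)). }
    exists d. split; auto. exists (map (fun x0 => fst (ie x0)) l0).
    intros y0 y1 Hy1. destruct (Hl0 y0) as [x0 [Hx0 Hy0]].
    exists (fst (ie x0)). split; [exact (in_map (fun x => fst (ie x)) _ _ Hx0)|].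
    apply (proj2 (Hie x0)); auto. specialize (Hle x0 Hx0). lra.
Qed.

Lemma product_finite_subcover : compact_space X0 -> compact_space X1 ->
  exists l : list I, forall p, exists i, In i l /\ W i p.
Proof.
  intros C0 C1.
  assert (Htube : forall x1, exists dl : R * list I, fst dl > 0 /\ forall y0 y1,
    dist X1 x1 y1 < fst dl -> exists i, In i (snd dl) /\ W i (y0, y1)).
  { intros x1. destruct (tube_cover C0 x1) as [d [Hd [li Hli]]].
    exists (d, li). auto. }
  destruct (choice _ Htube) as [dl Hdl].
  destruct (C1 (Base X1) (fun x1 y1 => dist X1 x1 y1 < fst (dl x1))) as [l1 Hl1].
  - intros x1. apply ball_open.
  - intros x. exists x. rewrite dist_self. apply (proj1 (Hdl x)).
  - exists (flat_map (fun x1 => snd (dl x1)) l1). intros [y0 y1].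
    destruct (Hl1 y1) as [x1 [Hx1 Hd]].
    destruct (proj2 (Hdl x1) y0 y1 Hd) as [i [Hi Hw]].
    exists i. split; auto. apply in_flat_map. eauto.
Qed.

End ProductCompact.

Lemma product_cover_compact (X0 X1 : Metric_Space) :
  compact_space X0 -> compact_space X1 -> cover_compact (box_open X0 X1).
Proof. intros C0 C1 I W HW Hcov. exact (product_finite_subcover X0 X1 I W HW Hcov C0 C1). Qed.

Lemma continuous2_near (X0 X1 : Metric_Space) (J : Base X0 -> Base X1 -> R) :
  continuous2 X0 X1 J -> forall x0 x1 eps, eps > 0 -> exists d, d > 0 /\
    forall y0 y1, dist X0 x0 y0 < d -> dist X1 x1 y1 < d ->
      J x0 x1 - eps < J y0 y1 < J x0 x1 + eps.
Proof.
  intros HJ x0 x1 eps Heps. destruct (HJ x0 x1 eps Heps) as [d [Hd Hb]].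
  exists d. split; auto. intros y0 y1 H0 H1.
  destruct (Rabs_def2 _ _ (Hb y0 y1 H0 H1)). lra.
Qed.

Lemma continuous2_sublevel_box_open (X0 X1 : Metric_Space)
    (J : Base X0 -> Base X1 -> R) (c : R) :
  continuous2 X0 X1 J -> box_open X0 X1 (fun p => J (fst p) (snd p) < c).
Proof.
  intros HJ [x0 x1] Hx. simpl in Hx.
  destruct (continuous2_near X0 X1 J HJ x0 x1 (c - J x0 x1)) as [d [Hd Hnear]];
    [lra|].
  exists d. split; auto. intros y0 y1 H0 H1. simpl.
  specialize (Hnear y0 y1 H0 H1). lra.
Qed.

Lemma continuous2_attains_max_on_superlevel (P0 P1 : Metric_Space)
    (J0 J1 : Base P0 -> Base P1 -> R) (V : R) :
  compact_space P0 -> compact_space P1 ->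
  continuous2 P0 P1 J0 -> continuous2 P0 P1 J1 ->
  (exists u0 u1, J1 u0 u1 >= V) ->
  exists u0s u1s, J1 u0s u1s >= V /\
    forall v0 v1, J1 v0 v1 >= V -> J0 v0 v1 <= J0 u0s u1s.
Proof.
  intros C0 C1 HJ0 HJ1 [a0 [a1 Ha]].
  destruct (cover_compact_attains_max (box_open P0 P1)
    (fun p => J1 (fst p) (snd p) >= V) (fun p => J0 (fst p) (snd p))
    (product_cover_compact P0 P1 C0 C1)) as [[u0s u1s] [HA Hmax]].
  - exists (a0, a1). exact Ha.
  - intros q p [Hlt|Hout].
    + destruct (continuous2_sublevel_box_open P0 P1 J0 _ HJ0 p Hlt)
        as [e [He Hbox]].
      exists e. split; [exact He|]. intros y0 y1 H0 H1. left. exact (Hbox y0 y1 H0 H1).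
    + apply Rnot_ge_lt in Hout.
      destruct (continuous2_sublevel_box_open P0 P1 J1 V HJ1 p Hout)
        as [e [He Hbox]].
      exists e. split; [exact He|]. intros y0 y1 H0 H1. right. simpl.
      specialize (Hbox y0 y1 H0 H1). simpl in Hbox. lra.
  - exists u0s, u1s. split; auto. intros v0 v1 Hv. exact (Hmax (v0, v1) Hv).
Qed.

Lemma lower_value_exists (P0 P1 : Metric_Space) (J1 : Base P0 -> Base P1 -> R) :
  compact_space P0 -> compact_space P1 ->
  nonempty_space P0 -> nonempty_space P1 ->
  continuous2 P0 P1 J1 -> exists V, is_lower_value J1 V.
Proof.
  intros C0 C1 N0 N1 HJ1.
  assert (Hminimizer : forall u1, exists u0, forall v0, J1 u0 u1 <= J1 v0 u1).
  { intros u1.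
    destruct (compact_attains_max P0 (fun u0 => - J1 u0 u1) C0 N0) as [m Hm].
    - intros c x Hx.
      destruct (continuous2_near P0 P1 J1 HJ1 x u1 (c + J1 x u1)) as [d [Hd Hnear]];
        [lra|].
      exists d. split; auto. intros y Hy.
      specialize (Hnear y u1 Hy). rewrite dist_self in Hnear.
      specialize (Hnear Hd). lra.
    - exists m. intros v0. specialize (Hm v0). lra. }
  destruct (choice _ Hminimizer) as [m Hm].
  set (g := fun u1 => J1 (m u1) u1).
  destruct (compact_attains_max P1 g C1 N1) as [v Hv].
  - intros c x Hx. unfold g in Hx.
    destruct (continuous2_near P0 P1 J1 HJ1 (m x) x (c - J1 (m x) x)) as [d [Hd Hnear]];
      [lra|].
    exists d. split; auto. intros y Hy. unfold g.
    specialize (Hnear (m x) y). rewrite dist_self in Hnear.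
    specialize (Hnear Hd Hy). specialize (Hm y (m x)). lra.
  - exists (g v), g. split.
    + intros u1. split; [exists (m u1); reflexivity | apply Hm].
    + split; [exists v; reflexivity | exact Hv].
Qed.

Section InverseStackelberg.

Variables (P0 P1 : Type) (J0 J1 : P0 -> P1 -> R) (V : R).
Hypothesis HV : is_lower_value J1 V.

Lemma lower_value_punishment : exists m : P1 -> P0, forall u1, J1 (m u1) u1 <= V.
Proof.
  destruct HV as [g [Hmin [_ Hmax]]].
  destruct (choice _ (fun u1 => proj1 (Hmin u1))) as [m Hm].
  exists m. intros u1. rewrite Hm. apply Hmax.
Qed.

Lemma lower_value_guarantee : exists u1v, forall u0, V <= J1 u0 u1v.
Proof.
  destruct HV as [g [Hmin [[v Hv] _]]].
  exists v. intros u0. rewrite <- Hv. apply (proj2 (Hmin v)).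
Qed.

Lemma follower_opt_in_A (alpha : P1 -> P0) (u1 : P1) :
  follower_opt J1 alpha u1 -> in_A J1 V (alpha u1) u1.
Proof.
  intros Hopt. destruct lower_value_guarantee as [u1v Hu1v].
  unfold in_A. specialize (Hopt u1v). specialize (Hu1v (alpha u1v)). lra.
Qed.

Definition punish_except (m : P1 -> P0) (v1 : P1) (v0 : P0) (u1 : P1) : P0 :=
  if excluded_middle_informative (u1 = v1) then v0 else m u1.

Lemma punish_except_at (m : P1 -> P0) (v1 : P1) (v0 : P0) :
  punish_except m v1 v0 v1 = v0.
Proof.
  unfold punish_except. destruct (excluded_middle_informative (v1 = v1)); tauto.
Qed.

Lemma punish_except_follower_opt (m : P1 -> P0) (v0 : P0) (v1 : P1) :
  (forall u1, J1 (m u1) u1 <= V) -> in_A J1 V v0 v1 ->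
  follower_opt J1 (punish_except m v1 v0) v1.
Proof.
  intros Hm Hv u1. rewrite punish_except_at. unfold punish_except, in_A in *.
  destruct (excluded_middle_informative (u1 = v1)) as [->|]; [lra|].
  specialize (Hm u1). lra.
Qed.

Lemma inverse_stackelberg_argmax_A (alphas : P1 -> P0) (u1s : P1) :
  inverse_stackelberg J0 J1 alphas u1s -> argmax_A J0 J1 V (alphas u1s) u1s.
Proof.
  intros [Hopt Hbest]. split; [exact (follower_opt_in_A _ _ Hopt)|].
  intros v0 v1 Hv. destruct lower_value_punishment as [m Hm].
  rewrite <- (punish_except_at m v1 v0) at 1.
  exact (Hbest _ v1 (punish_except_follower_opt m v0 v1 Hm Hv)).
Qed.

Lemma argmax_A_inverse_stackelberg (u0s : P0) (u1s : P1) :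
  argmax_A J0 J1 V u0s u1s ->
  exists alphas, alphas u1s = u0s /\ inverse_stackelberg J0 J1 alphas u1s.
Proof.
  intros [HA Hmax]. destruct lower_value_punishment as [m Hm].
  exists (punish_except m u1s u0s). split; [apply punish_except_at|].
  split; [exact (punish_except_follower_opt m u0s u1s Hm HA)|].
  intros alpha u1 Hopt. rewrite punish_except_at.
  exact (Hmax _ _ (follower_opt_in_A alpha u1 Hopt)).
Qed.

End InverseStackelberg.

Theorem theorem1 (P0 P1 : Metric_Space)
  (J0 J1 : Base P0 -> Base P1 -> R)
  (hP0c : compact_space P0) (hP1c : compact_space P1)
  (hP0n : nonempty_space P0) (hP1n : nonempty_space P1)
  (hJ0 : continuous2 P0 P1 J0) (hJ1 : continuous2 P0 P1 J1) :
  (forall V : R, is_lower_value J1 V ->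
     (forall (alphas : Base P1 -> Base P0) (u1s : Base P1),
        inverse_stackelberg J0 J1 alphas u1s ->
        in_A J1 V (alphas u1s) u1s /\ argmax_A J0 J1 V (alphas u1s) u1s) /\
     (forall (u0s : Base P0) (u1s : Base P1),
        in_A J1 V u0s u1s -> argmax_A J0 J1 V u0s u1s ->
        exists alphas : Base P1 -> Base P0,
          alphas u1s = u0s /\ inverse_stackelberg J0 J1 alphas u1s)) /\
  (exists (alphas : Base P1 -> Base P0) (u1s : Base P1),
     inverse_stackelberg J0 J1 alphas u1s).
Proof.
  split.
  - intros V HV. split.
    + intros alphas u1s Hsol.
      pose proof (inverse_stackelberg_argmax_A _ _ J0 J1 V HV alphas u1s Hsol) as Hmax.
      split; [exact (proj1 Hmax) | exact Hmax].
    + intros u0s u1s _. exact (argmax_A_inverse_stackelberg _ _ J0 J1 V HV u0s u1s).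
  - destruct (lower_value_exists P0 P1 J1 hP0c hP1c hP0n hP1n hJ1) as [V HV].
    destruct hP0n as [a0].
    destruct (lower_value_guarantee _ _ J1 V HV) as [u1v Hu1v].
    destruct (continuous2_attains_max_on_superlevel P0 P1 J0 J1 V hP0c hP1c hJ0 hJ1)
      as [u0s [u1s Hmax]].
    { exists a0, u1v. apply Rle_ge, Hu1v. }
    destruct (argmax_A_inverse_stackelberg _ _ J0 J1 V HV u0s u1s Hmax)
      as [alphas [_ Hsol]].
    exists alphas, u1s. exact Hsol.
Qed.
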